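(* Assume $\gamma\ge1$. Then $$\log\frac{\det(\underline V_{i,t}^{-1})}{\det(\Lambda^0_{i,t})}\le2d\log\Big\{\frac{3k(k+1)}{8}+\gamma k+2\lambda e_k\Big\}.$$
   Context: $d,k\ge1$, $i+t-1\le k$. $C_{j,u}=[1,0_{j-1}^\top,1,0_{k-j+u-1}^\top,1,0_{k-u}^\top]\otimes I_d\in\mathbb R^{d\times(2k+1)d}$. $V_{0,k}=\mathrm{diag}(\gamma I_d,\gamma I_{kd}+\lambda L_{\rm user}\otimes I_d,\gamma I_{kd}+\lambda L_{\rm time}\otimes I_d)$ with $\lambda\ge0$, where $L_{\rm user},L_{\rm time}$ are the Laplacians ($L=QQ^\top$, $Q$ signed incidence matrix) of a user graph and a time graph on $k$ vertices each, and $e_k$ is the total number of edges of the two graphs. Pairs are ordered $(1,1),(1,2),(2,1),(1,3),(2,2),(3,1),\dots$ and $\mathcal O_{i,t}$ is the set of pairs strictly before $(i,t)$ (all with $j+u-1\le k$). For $(j,u)\in\mathcal O_{i,t}$: $x_{j,u}\in\mathbb R^d$ with $\|x_{j,u}\|\le1$, $\phi_{j,u}=C_{j,u}^\top x_{j,u}$, $\tilde\sigma^2_{j,u}=\pi_{j,u}(1-\pi_{j,u})$ with $\pi_{j,u}\in(0,1)$. $V_{i,t}=V_{0,k}+\sum_{(j,u)\in\mathcal O_{i,t}}\tilde\sigma^2_{j,u}\phi_{j,u}\phi_{j,u}^\top$, $\underline V_{i,t}=(C_{i,t}V_{i,t}^{-1}C_{i,t}^\top)^{-1}$, $\Lambda^0_{i,t}=C_{i,t}V_{i,t}^{-1}V_{0,k}V_{i,t}^{-1}C_{i,t}^\top$.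 *)

From HB Require Import structures.
From mathcomp Require Import all_boot all_order all_algebra.
From mathcomp Require Import reals exp.
From mathcomp Require Export mxtens.
Set Implicit Arguments. Unset Strict Implicit. Unset Printing Implicit Defensive.
Import Order.TTheory GRing.Theory Num.Theory.
Local Open Scope ring_scope.

Section Defs.
Variable R : realType.

(* A simple undirected graph on the vertex set {1..k} (encoded as 'I_k) is
   given by its edge set E, each edge (a,b) stored once with a < b
   (this fixes the orientation used in the signed incidence matrix). *)
Definition simple_edges (k : nat) (E : {set 'I_k * 'I_k}) : Prop :=
  forall p, p \in E -> (p.1 < p.2)%N.

Definition incidence (k : nat) (E : {set 'I_k * 'I_k}) : 'M[R]_(k, #|E|) :=
  \matrix_(v < k, m < #|E|)
    let p := enum_val m in
    if v == p.1 then 1 else if v == p.2 then -1 else 0.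

Definition laplacian (k : nat) (E : {set 'I_k * 'I_k}) : 'M[R]_k :=
  incidence E *m (incidence E)^T.

(* unit row vector of R^k with a 1 at the (1-based) position j *)
Definition unitrow (k j : nat) : 'rV[R]_k := \row_(a < k) (a.+1 == j)%:R.

(* C_{j,u} = [1, 0_{j-1}, 1, 0_{k-j+u-1}, 1, 0_{k-u}] (x) I_d,
   a d x (2k+1)d matrix; the length-(2k+1) row is indexed by 1 + (k + k). *)
Definition Cmat (d k j u : nat) : 'M[R]_(d, (1 + (k + k)) * d) :=
  castmx (mul1n d, erefl _)
    ((row_mx (1 : 'rV[R]_1) (row_mx (unitrow k j) (unitrow k u)))
       *t (1%:M : 'M[R]_d)).

(* V_{0,k} = diag(g I_d, g I_{kd} + l L_user (x) I_d, g I_{kd} + l L_time (x) I_d)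
   = diag(g, g I_k + l L_user, g I_k + l L_time) (x) I_d *)
Definition V0 (d k : nat) (g l : R) (Eu Et : {set 'I_k * 'I_k}) :
  'M[R]_((1 + (k + k)) * d) :=
  (block_mx (g%:M : 'M[R]_1) 0 0
     (block_mx (g%:M + l *: laplacian Eu) 0 0 (g%:M + l *: laplacian Et)))
  *t (1%:M : 'M[R]_d).

(* the ordering (1,1),(1,2),(2,1),(1,3),(2,2),(3,1),... : (j,u) strictly
   precedes (i,t) (all indices >= 1) *)
Definition precedes (j u i t : nat) : bool :=
  [&& (0 < j)%N, (0 < u)%N &
      ((j + u < i + t)%N || ((j + u == i + t) && (j < i)%N))].

Definition phi (d k j u : nat) (x : 'cV[R]_d) : 'cV[R]_((1 + (k + k)) * d) :=
  (Cmat d k j u)^T *m x.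

(* V_{i,t} = V_{0,k} + sum_{(j,u) in O_{i,t}} sigma^2_{j,u} phi phi^T,
   sigma^2_{j,u} = pi_{j,u}(1 - pi_{j,u}).  Pairs in O_{i,t} satisfy
   j + u <= i + t <= k + 1, so j,u range over 0..k. *)
Definition Vit (d k : nat) (g l : R) (Eu Et : {set 'I_k * 'I_k})
  (x : nat -> nat -> 'cV[R]_d) (pi : nat -> nat -> R) (i t : nat) :
  'M[R]_((1 + (k + k)) * d) :=
  V0 d g l Eu Et +
  \sum_(j < k.+1) \sum_(u < k.+1 | precedes j u i t)
     (pi j u * (1 - pi j u)) *: (phi k j u (x j u) *m (phi k j u (x j u))^T).

Definition Vund (d k : nat) (g l : R) (Eu Et : {set 'I_k * 'I_k})
  (x : nat -> nat -> 'cV[R]_d) (pi : nat -> nat -> R) (i t : nat) : 'M[R]_d :=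
  invmx (Cmat d k i t *m invmx (Vit g l Eu Et x pi i t) *m (Cmat d k i t)^T).

Definition Lambda0 (d k : nat) (g l : R) (Eu Et : {set 'I_k * 'I_k})
  (x : nat -> nat -> 'cV[R]_d) (pi : nat -> nat -> R) (i t : nat) : 'M[R]_d :=
  Cmat d k i t *m invmx (Vit g l Eu Et x pi i t) *m V0 d g l Eu Et
    *m invmx (Vit g l Eu Et x pi i t) *m (Cmat d k i t)^T.

Definition sqnorm (d : nat) (v : 'cV[R]_d) : R := \sum_(a < d) v a 0 ^+ 2.

End Defs.

From HB Require Import structures.
From mathcomp Require Import all_boot all_order all_algebra.
From mathcomp Require Import reals exp.
From mathcomp Require Import ring lra zify.
Import Order.TTheory GRing.Theory Num.Theory.
Local Open Scope ring_scope.
Set Implicit Arguments. Unset Strict Implicit.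

(* Write V_{i,t} = V_0 + M, where M is the weighted sum of the outer products
   phi phi^T over the pairs preceding (i,t).  Since gamma >= 1 and Laplacians
   are positive semidefinite, I <= V_0 in the Loewner order.  Each weight
   pi (1 - pi) is at most 1/4, each |phi|^2 = 3 |x|^2 is at most 3, and at most
   k (k + 1) / 2 pairs precede (i,t), so M <= (3 k (k + 1) / 8) I <= (S - 1) V_0
   with S the argument of the logarithm; hence V_{i,t} <= S V_0.  Conjugating
   by C V^{-1} gives C V^{-1} C^T <= S Lambda^0, and the determinant is monotone
   on positive definite matrices (induction through Schur complements), so the
   ratio of determinants is at most S^d.  The edge term 2 lambda e_k is only
   used through its nonnegativity. *)

Section QuadraticForms.
Variable R : realFieldType.

Definition sqnormr n (w : 'rV[R]_n) : R := (w *m w^T) 0 0.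
Definition qform n (A : 'M[R]_n) (v : 'rV[R]_n) : R := (v *m A *m v^T) 0 0.
Definition posdef n (A : 'M[R]_n) := forall v, v != 0 -> 0 < qform A v.
Definition loewner_le n (A B : 'M[R]_n) := forall v, qform A v <= qform B v.

Lemma sqnormrE n (w : 'rV[R]_n) : sqnormr w = \sum_i w 0 i ^+ 2.
Proof. by rewrite /sqnormr mxE; apply: eq_bigr => j _; rewrite mxE expr2. Qed.

Lemma sqnormr_mx11 (p : 'rV[R]_1) : sqnormr p = p 0 0 ^+ 2.
Proof. by rewrite sqnormrE big_ord1. Qed.

Lemma sqnormr_ge0 n (w : 'rV[R]_n) : 0 <= sqnormr w.
Proof. by rewrite sqnormrE; apply: sumr_ge0 => i _; apply: sqr_ge0. Qed.

Lemma sqnormr_eq0 n (w : 'rV[R]_n) : sqnormr w = 0 -> w = 0.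
Proof.
rewrite sqnormrE => w0; apply/matrixP => i j; rewrite [i]ord1 mxE.
have /eqP := psumr_eq0P (fun i _ => sqr_ge0 (w 0 i)) w0 (i := j) isT.
by rewrite sqrf_eq0 => /eqP.
Qed.

Lemma sqnormr_gt0 n (w : 'rV[R]_n) : w != 0 -> 0 < sqnormr w.
Proof.
move=> w_nz; rewrite lt_def sqnormr_ge0 andbT.
by apply: contra w_nz => /eqP/sqnormr_eq0 ->.
Qed.

Lemma qformD n (A B : 'M[R]_n) v : qform (A + B) v = qform A v + qform B v.
Proof. by rewrite /qform mulmxDr mulmxDl mxE. Qed.

Lemma qformZ n c (A : 'M[R]_n) v : qform (c *: A) v = c * qform A v.
Proof. by rewrite /qform -scalemxAr -scalemxAl mxE. Qed.

Lemma qform_sum n (I : finType) (P : pred I) (F : I -> 'M[R]_n) v :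
  qform (\sum_(i | P i) F i) v = \sum_(i | P i) qform (F i) v.
Proof.
elim/big_rec2: _ => [|i y M _ <-]; last by rewrite qformD.
by rewrite /qform mulmx0 mul0mx mxE.
Qed.

Lemma qform_scalar n a (v : 'rV[R]_n) : qform a%:M v = a * sqnormr v.
Proof. by rewrite /qform mul_mx_scalar -scalemxAl mxE. Qed.

Lemma qform_conj m n (P : 'M[R]_(m, n)) (A : 'M[R]_n) z :
  qform (P *m A *m P^T) z = qform A (z *m P).
Proof. by rewrite /qform trmx_mul !mulmxA. Qed.

Lemma qform_gram m n (P : 'M[R]_(m, n)) z :
  qform (P *m P^T) z = sqnormr (z *m P).
Proof. by rewrite /sqnormr /qform trmx_mul !mulmxA. Qed.

Lemma qform_block_diag m n (A : 'M[R]_m) (D : 'M[R]_n) p q :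
  qform (block_mx A 0 0 D) (row_mx p q) = qform A p + qform D q.
Proof.
rewrite /qform mul_row_block !mulmx0 addr0 add0r tr_row_mx mul_row_col.
by rewrite mxE.
Qed.

Lemma cauchy_schwarz_row n (u w : 'rV[R]_n) :
  ((u *m w^T) 0 0) ^+ 2 <= sqnormr u * sqnormr w.
Proof.
set a := sqnormr u; set b := (u *m w^T) 0 0; set c := sqnormr w.
have wu : (w *m u^T) 0 0 = b by rewrite -[w *m u^T]trmxK trmx_mul trmxK mxE.
have expand : sqnormr (a *: w - b *: u) = a * (a * c - b ^+ 2).
  rewrite /sqnormr linearB !linearZ /= mulmxDl !mulmxDr -!scalemxAl -!scalemxAr.
  move: wu; rewrite /a /b /c /sqnormr !mulNmx !mulmxN !mxE => ->.
  move: (\sum_j u 0 j * u^T j 0) (\sum_j u 0 j * w^T j 0) => uu uw.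
  move: (\sum_j w 0 j * w^T j 0) => ww; clear; ring.
have [a0|a_nz] := eqVneq a 0.
  move: (sqnormr_eq0 a0); rewrite /b => ->.
  by rewrite mul0mx mxE expr0n /= a0 mul0r.
have a_gt0 : 0 < a by rewrite lt_def a_nz sqnormr_ge0.
move: (sqnormr_ge0 (a *: w - b *: u)).
by rewrite expand pmulr_rge0 // subr_ge0 mulrC.
Qed.

Lemma qform_rank1_le n (p : 'cV[R]_n) y :
  qform (p *m p^T) y <= sqnormr y * sqnormr p^T.
Proof.
by rewrite qform_gram sqnormr_mx11 -[p in y *m p]trmxK cauchy_schwarz_row.
Qed.

Lemma variance_rank1_le n (p : R) (f : 'cV[R]_n) (s : R) y :
  0 < p < 1 -> sqnormr f^T <= s ->
  p * (1 - p) * qform (f *m f^T) y <= s / 4 * sqnormr y.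
Proof.
case/andP=> p_gt0 p_lt1 f_le.
have var_le : p * (1 - p) <= 1 / 4.
  by rewrite -subr_ge0 (_ : _ - _ = (p - 1 / 2) ^+ 2) ?sqr_ge0 //; field.
have q_le := qform_rank1_le f y; have y_ge0 := sqnormr_ge0 y.
have q_ge0 : 0 <= qform (f *m f^T) y by rewrite qform_gram sqnormr_ge0.
have f_ge0 := sqnormr_ge0 f^T.
move: q_le var_le q_ge0 f_le f_ge0 y_ge0.
move: (qform _ y) (sqnormr f^T) (sqnormr y) => q a b; nra.
Qed.

Lemma posdef_ge1 n (A : 'M[R]_n) : loewner_le 1%:M A -> posdef A.
Proof.
move=> A_ge1 v v_nz; apply: lt_le_trans (A_ge1 v).
by rewrite qform_scalar mul1r sqnormr_gt0.
Qed.

Lemma posdef_addr n (A B : 'M[R]_n) :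
  posdef A -> (forall v, 0 <= qform B v) -> posdef (A + B).
Proof. by move=> A_pd B_ge0 v v_nz; rewrite qformD ltr_wpDr ?A_pd. Qed.

Lemma loewner_add_scale n (V0 M : 'M[R]_n) (S : R) :
  1 <= S -> loewner_le 1%:M V0 -> loewner_le M ((S - 1)%:M) ->
  loewner_le (V0 + M) (S *: V0).
Proof.
move=> S_ge1 V0_ge1 M_le v; rewrite qformD qformZ.
apply: (le_trans (lerD (lexx _) (M_le v))); rewrite qform_scalar.
have : (S - 1) * sqnormr v <= (S - 1) * qform V0 v.
  by rewrite ler_wpM2l ?subr_ge0 // -[sqnormr v]mul1r -qform_scalar.
by move: (qform V0 v) (_ * sqnormr v) => q s; lra.
Qed.

Definition schur n (X : 'M[R]_(1 + n)) : 'M[R]_n :=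
  drsubmx X - (ulsubmx X 0 0)^-1 *: ((ursubmx X)^T *m ursubmx X).

Definition schur_factor n (X : 'M[R]_(1 + n)) : 'M[R]_(1 + n) :=
  block_mx 1%:M 0 ((ulsubmx X 0 0)^-1 *: (ursubmx X)^T) 1%:M.

Lemma schur_decomp n (X : 'M[R]_(1 + n)) : X^T = X -> ulsubmx X 0 0 != 0 ->
  X = schur_factor X *m block_mx (ulsubmx X 0 0)%:M 0 0 (schur X)
        *m (schur_factor X)^T.
Proof.
set a := ulsubmx X 0 0; set b := ursubmx X => X_sym a_nz.
have X_dl : dlsubmx X = b^T by rewrite trmx_ursub X_sym.
have X_ul : ulsubmx X = a%:M by rewrite -mx11_scalar.
have tb : (a^-1 *: b^T)^T = a^-1 *: b by rewrite linearZ /= trmxK.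
rewrite /schur_factor /schur -/a -/b tr_block_mx !trmx1 trmx0 tb.
rewrite !mulmx_block ?mul1mx ?mul0mx ?mulmx0 ?mulmx1 ?addr0 ?add0r ?mul1mx.
have e1 : a^-1 *: b^T *m a%:M = b^T.
  by rewrite mul_mx_scalar scalerA mulfV // scale1r.
have e2 : a%:M *m (a^-1 *: b) = b.
  by rewrite mul_scalar_mx scalerA mulfV // scale1r.
rewrite e1 e2 -scalemxAr addrC subrK -X_dl -X_ul.
exact: (esym (submxK X)).
Qed.

Lemma schur_sym n (X : 'M[R]_(1 + n)) : X^T = X -> (schur X)^T = schur X.
Proof.
by move=> X_sym; rewrite linearB linearZ /= trmx_mul trmxK trmx_drsub X_sym.
Qed.

Lemma det_schur n (X : 'M[R]_(1 + n)) : X^T = X -> ulsubmx X 0 0 != 0 ->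
  \det X = ulsubmx X 0 0 * \det (schur X).
Proof.
move=> X_sym a_nz; rewrite {1}(schur_decomp X_sym a_nz) !det_mulmx det_tr.
by rewrite det_lblock det_ublock !det1 det_scalar1 !mul1r mulr1.
Qed.

Lemma qform_schur n (X : 'M[R]_(1 + n)) s v :
  X^T = X -> ulsubmx X 0 0 != 0 ->
  qform X (row_mx s v) =
    ulsubmx X 0 0 * ((s + v *m ((ulsubmx X 0 0)^-1 *: (ursubmx X)^T)) 0 0) ^+ 2
    + qform (schur X) v.
Proof.
move=> X_sym a_nz; rewrite {1}(schur_decomp X_sym a_nz) qform_conj.
rewrite mul_row_block mulmx1 !mulmx0 add0r mulmx1 qform_block_diag.
by rewrite qform_scalar sqnormr_mx11.
Qed.

(* The vector [- v b^T / a, v] minimises the form of X over its first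
   coordinate; its value there is the form of the Schur complement. *)
Lemma qform_schur_min n (X : 'M[R]_(1 + n)) v :
  X^T = X -> ulsubmx X 0 0 != 0 ->
  qform X (row_mx (- (v *m ((ulsubmx X 0 0)^-1 *: (ursubmx X)^T))) v) =
  qform (schur X) v.
Proof.
move=> X_sym a_nz.
by rewrite qform_schur // addNr [X in X ^+ 2]mxE expr0n mulr0 add0r.
Qed.

Lemma qform_row_mx10 n (X : 'M[R]_(1 + n)) :
  qform X (row_mx 1%:M 0) = ulsubmx X 0 0.
Proof.
rewrite /qform -[X]submxK mul_row_block !mul0mx !addr0 !mul1mx tr_row_mx.
by rewrite trmx1 trmx0 mul_row_col mulmx0 addr0 mulmx1 submxK.
Qed.

Lemma posdef_ulsub n (X : 'M[R]_(1 + n)) : posdef X -> 0 < ulsubmx X 0 0.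
Proof.
move=> X_pd; rewrite -qform_row_mx10; apply: X_pd.
rewrite row_mx_eq0 negb_and; apply/orP; left.
by apply/eqP => /matrixP /(_ 0 0); rewrite !mxE /= => /eqP; rewrite oner_eq0.
Qed.

Lemma posdef_schur n (X : 'M[R]_(1 + n)) :
  X^T = X -> posdef X -> posdef (schur X).
Proof.
move=> X_sym X_pd v v_nz.
have a_nz : ulsubmx X 0 0 != 0 by rewrite gt_eqF ?posdef_ulsub.
rewrite -qform_schur_min //; apply: X_pd.
by apply: contra v_nz; rewrite row_mx_eq0 => /andP[_].
Qed.

Lemma loewner_schur n (X Y : 'M[R]_(1 + n)) :
  X^T = X -> Y^T = Y -> posdef X -> loewner_le X Y ->
  loewner_le (schur X) (schur Y).
Proof.
move=> X_sym Y_sym X_pd XY v.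
have aX_gt0 := posdef_ulsub X_pd.
have aY_gt0 : 0 < ulsubmx Y 0 0.
  by apply: lt_le_trans aX_gt0 _; rewrite -!qform_row_mx10.
rewrite -(qform_schur_min v Y_sym) ?gt_eqF //; apply: le_trans (XY _).
by rewrite qform_schur ?gt_eqF // lerDr mulr_ge0 ?sqr_ge0 ?ltW.
Qed.

Lemma det_loewner_mono n (X Y : 'M[R]_n) :
  X^T = X -> Y^T = Y -> posdef X -> loewner_le X Y -> 0 < \det X <= \det Y.
Proof.
elim: n X Y => [|n IH] X Y; first by rewrite !det_mx00 ltr01 lexx.
change 'M[R]_(1 + n) in X, Y => X_sym Y_sym X_pd XY.
have aX_gt0 := posdef_ulsub X_pd.
have aXY : ulsubmx X 0 0 <= ulsubmx Y 0 0 by rewrite -!qform_row_mx10.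
have aY_gt0 := lt_le_trans aX_gt0 aXY.
have /andP[dX_gt0 dXY] := IH _ _ (schur_sym X_sym) (schur_sym Y_sym)
  (posdef_schur X_sym X_pd) (loewner_schur X_sym Y_sym X_pd XY).
rewrite !det_schur ?gt_eqF // mulr_gt0 //=.
by rewrite ler_pM // ltW.
Qed.

Lemma trmx_conj_sym m n (P : 'M[R]_(m, n)) (A : 'M[R]_n) :
  A^T = A -> (P *m A *m P^T)^T = P *m A *m P^T.
Proof. by move=> A_sym; rewrite !trmx_mul trmxK A_sym mulmxA. Qed.

(* With W = V^-1 we have C W C^T = (C W) V (C W)^T and
   C W V0 W C^T = (C W) V0 (C W)^T, so V <= S V0 transfers to them. *)
Lemma det_conj_inv_le n d (V V0 : 'M[R]_n) (C : 'M[R]_(d, n)) (S : R) :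
  V^T = V -> V0^T = V0 -> posdef V -> loewner_le V (S *: V0) ->
  (forall w : 'rV[R]_d, w *m C = 0 -> w = 0) ->
  0 < \det (C *m invmx V *m C^T) <=
      S ^+ d * \det (C *m invmx V *m V0 *m invmx V *m C^T).
Proof.
move=> V_sym V0_sym V_pd VS C_inj.
have /andP[dV_gt0 _] := det_loewner_mono V_sym V_sym V_pd (fun v => lexx _).
have V_unit : V \in unitmx by rewrite unitmxE unitfE gt_eqF.
have W_sym : (invmx V)^T = invmx V by rewrite trmx_inv V_sym.
have eA : C *m invmx V *m C^T = C *m invmx V *m V *m (C *m invmx V)^T.
  by rewrite trmx_mul W_sym -!mulmxA (mulmxA (invmx V) V) mulVmx // mul1mx.
have eB : C *m invmx V *m V0 *m invmx V *m C^T
          = C *m invmx V *m V0 *m (C *m invmx V)^T.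
  by rewrite trmx_mul W_sym !mulmxA.
rewrite -detZ eA eB; apply: det_loewner_mono.
- exact: trmx_conj_sym.
- by rewrite [LHS]linearZ /= trmx_conj_sym.
- move=> w w_nz; rewrite qform_conj; apply: V_pd.
  apply: contra w_nz => /eqP wCW0; apply/eqP/C_inj.
  by rewrite -[w *m C]mulmx1 -(mulVmx V_unit) mulmxA -(mulmxA w) wCW0 mul0mx.
- by move=> w; rewrite qformZ !qform_conj -qformZ.
Qed.

End QuadraticForms.

Lemma tensmxDl (R : comPzRingType) m n p q (A B : 'M[R]_(m, n))
    (D : 'M[R]_(p, q)) :
  (A + B) *t D = A *t D + B *t D.
Proof. by apply/matrixP => i j; rewrite !mxE mulrDl. Qed.

Lemma tensmxZl (R : comPzRingType) m n p q c (A : 'M[R]_(m, n))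
    (D : 'M[R]_(p, q)) :
  (c *: A) *t D = c *: (A *t D).
Proof. by apply/matrixP => i j; rewrite !mxE mulrA. Qed.

Lemma tens_scalar_mx1 (R : comPzRingType) m n (a : R) :
  (a%:M : 'M[R]_m) *t (1%:M : 'M[R]_n) = a%:M.
Proof.
apply/matrixP => i j.
case: (mxtens_indexP i) => i0 i1; case: (mxtens_indexP j) => j0 j1.
rewrite tensmxE !mxE (inj_eq (can_inj (@mxtens_indexK m n))) xpair_eqE.
by case: (i0 == j0); case: (i1 == j1); rewrite /= ?mulr1n ?mulr0n ?mulr1 ?mulr0.
Qed.

Lemma precedes_bounds k j u i t : (i + t - 1 <= k)%N -> precedes j u i t ->
  (1 <= j <= k)%N && (1 <= u <= k)%N.
Proof. by move=> itk /and3P[? ? /orP[|/andP[/eqP ? _]]]; lia. Qed.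

Definition npreceding k i t : nat :=
  \sum_(j < k.+1) \sum_(u < k.+1 | precedes j u i t) 1.

Lemma count_pos_le n m :
  (\sum_(u < n | (0 < u) && (u <= m)) 1 <= minn n.-1 m)%N.
Proof.
elim: n => [|n IH]; first by rewrite big_ord0.
rewrite big_mkcond big_ord_recr /= -big_mkcond.
case: ifP => /= [/andP[u_gt0 u_le]|_].
  by apply: (leq_trans (leq_add IH (leqnn 1))); lia.
by rewrite addn0 (leq_trans IH); lia.
Qed.

Lemma sum_subn_ord_double k : ((\sum_(j < k) (k - j)) * 2 = k * k.+1)%N.
Proof.
elim: k => [|k IH]; first by rewrite big_ord0.
rewrite big_ord_recr /= subSnn.
have -> : (\sum_(j < k) (k.+1 - j) = \sum_(j < k) (k - j) + k)%N.
  rewrite -[k in (_ + k)%N]card_ord -sum1_card -big_split /=.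
  by apply: eq_bigr => j _; rewrite subSn ?addn1 // ltnW.
by rewrite !mulnDl IH; lia.
Qed.

(* A pair (j, u) preceding (i, t) has j, u >= 1 and j + u <= i + t <= k + 1,
   so row j >= 1 contributes at most k + 1 - j pairs. *)
Lemma npreceding_le k i t : (i + t - 1 <= k)%N ->
  (npreceding k i t * 2 <= k * k.+1)%N.
Proof.
move=> itk; rewrite -sum_subn_ord_double leq_mul2r /npreceding big_ord_recl /=.
rewrite big_pred0 => [|u]; last by rewrite /precedes.
rewrite add0n; apply: leq_sum => j _.
apply: (@leq_trans (\sum_(u < k.+1 | (0 < u) && (u <= k - j)) 1)%N).
  rewrite big_mkcond [X in (_ <= X)%N]big_mkcond /=; apply: leq_sum => u _.
  case: ifP => // /and3P[_ u_gt0 prec]; rewrite u_gt0 /=.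
  by case: ifP => //; move: prec; rewrite /bump /=; lia.
by apply: (leq_trans (count_pos_le _ _)); lia.
Qed.

Section Design.
Variable R : realType.

Lemma unitrow_gram k j : (1 <= j <= k)%N ->
  unitrow R k j *m (unitrow R k j)^T = 1%:M.
Proof.
case/andP=> j_gt0 j_le; have j_lt : (j.-1 < k)%N by rewrite prednK.
apply/matrixP => a b; rewrite [a]ord1 [b]ord1 !mxE.
rewrite (bigD1 (Ordinal j_lt)) //= big1 ?addr0.
  by rewrite !mxE /= prednK // eqxx mulr1.
move=> c /eqP c_ne; rewrite !mxE.
suff /negbTE -> : c.+1 != j by rewrite mul0r.
apply/eqP => c_j; apply: c_ne; apply: val_inj; by rewrite /= -c_j.
Qed.

Lemma Cmat_gram d k j u : (1 <= j <= k)%N -> (1 <= u <= k)%N ->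
  Cmat R d k j u *m (Cmat R d k j u)^T = 3%:M.
Proof.
move=> hj hu; rewrite /Cmat trmx_cast /= -castmx_mul trmx_tens tensmx_mul.
rewrite !tr_row_mx !mul_row_col !unitrow_gram // !trmx1 mulmx1.
have -> : (1%:M + (1%:M + 1%:M) : 'M[R]_1) = 3%:M.
  by apply/matrixP => a b; rewrite [a]ord1 [b]ord1 !mxE /=; ring.
by rewrite tens_scalar_mx castmx_comp castmx_id mul1mx scalemx1.
Qed.

Lemma Cmat_row_inj d k j u : (1 <= j <= k)%N -> (1 <= u <= k)%N ->
  forall w : 'rV[R]_d, w *m Cmat R d k j u = 0 -> w = 0.
Proof.
move=> hj hu w /(congr1 (mulmx^~ (Cmat R d k j u)^T)).
rewrite mul0mx -mulmxA Cmat_gram // mul_mx_scalar => /eqP.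
by rewrite scaler_eq0 pnatr_eq0 /= => /eqP.
Qed.

Lemma sqnormr_phi_le d k j u (x : 'cV[R]_d) :
  (1 <= j <= k)%N -> (1 <= u <= k)%N -> sqnorm x <= 1 ->
  sqnormr (phi k j u x)^T <= 3.
Proof.
move=> hj hu x_le1.
rewrite /sqnormr /phi trmxK trmx_mul trmxK mulmxA -(mulmxA _ (Cmat R d k j u)).
rewrite Cmat_gram // mul_mx_scalar -scalemxAl mxE.
have -> : (x^T *m x) 0 0 = sqnorm x.
  by rewrite /sqnorm mxE; apply: eq_bigr => a _; rewrite mxE expr2.
by rewrite -[X in _ <= X]mulr1 ler_wpM2l.
Qed.

(* Q Q^T = diag(0, L_user, L_time): the zero row matches the first block of V_0,
   which carries no Laplacian. *)
Definition stacked_incidence k (Eu Et : {set 'I_k * 'I_k}) :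
  'M[R]_(1 + (k + k), #|Eu| + #|Et|) :=
  col_mx 0 (block_mx (incidence R Eu) 0 0 (incidence R Et)).

Lemma V0_gram d k (g l : R) (Eu Et : {set 'I_k * 'I_k}) :
  let Q := stacked_incidence Eu Et *t (1%:M : 'M[R]_d) in
  V0 d g l Eu Et = g%:M + l *: (Q *m Q^T).
Proof.
rewrite /= trmx_tens trmx1 tensmx_mul mul1mx -tensmxZl.
rewrite -[g%:M](tens_scalar_mx1 _ d).
rewrite -tensmxDl /V0; congr (_ *t _).
rewrite /stacked_incidence tr_col_mx mul_col_row tr_block_mx mulmx_block.
rewrite !trmx0 !mulmx0 !mul0mx !addr0 !add0r /laplacian.
rewrite [g%:M in RHS](scalar_mx_block 1 (k + k)) scale_block_mx add_block_mx.
rewrite !scaler0 !addr0 scalar_mx_block scale_block_mx add_block_mx.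
by rewrite !scaler0 !addr0.
Qed.

Lemma V0_sym d k (g l : R) (Eu Et : {set 'I_k * 'I_k}) :
  (V0 d g l Eu Et)^T = V0 d g l Eu Et.
Proof. by rewrite V0_gram linearD linearZ /= tr_scalar_mx trmx_mul trmxK. Qed.

Lemma V0_ge1 d k (g l : R) (Eu Et : {set 'I_k * 'I_k}) :
  1 <= g -> 0 <= l -> loewner_le 1%:M (V0 d g l Eu Et).
Proof.
move=> g_ge1 l_ge0 y; rewrite V0_gram qformD !qform_scalar qformZ qform_gram.
by rewrite -[X in X <= _]addr0 lerD ?ler_wpM2r ?mulr_ge0 ?sqnormr_ge0.
Qed.

End Design.

Section Information.
Variable R : realType.

Definition info_sum d k (x : nat -> nat -> 'cV[R]_d) (pi : nat -> nat -> R)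
    (i t : nat) : 'M[R]_((1 + (k + k)) * d) :=
  \sum_(j < k.+1) \sum_(u < k.+1 | precedes j u i t)
     (pi j u * (1 - pi j u)) *: (phi k j u (x j u) *m (phi k j u (x j u))^T).
Arguments info_sum {d} k x pi i t.

Variables (d k i t : nat) (x : nat -> nat -> 'cV[R]_d) (pi : nat -> nat -> R).
Hypothesis pi01 : forall j u, precedes j u i t -> 0 < pi j u < 1.

Lemma VitE (g l : R) (Eu Et : {set 'I_k * 'I_k}) :
  Vit g l Eu Et x pi i t = V0 d g l Eu Et + info_sum k x pi i t.
Proof. by []. Qed.

Lemma info_sum_sym : (info_sum k x pi i t)^T = info_sum k x pi i t.
Proof.
rewrite raddf_sum; apply: eq_bigr => j _; rewrite raddf_sum.
by apply: eq_bigr => u _; rewrite [LHS]linearZ /= trmx_mul trmxK.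
Qed.

Lemma Vit_sym (g l : R) (Eu Et : {set 'I_k * 'I_k}) :
  (Vit g l Eu Et x pi i t)^T = Vit g l Eu Et x pi i t.
Proof. by rewrite VitE linearD /= V0_sym info_sum_sym. Qed.

Lemma qform_info_sum y : qform (info_sum k x pi i t) y =
  \sum_(j < k.+1) \sum_(u < k.+1 | precedes j u i t)
     pi j u * (1 - pi j u)
       * qform (phi k j u (x j u) *m (phi k j u (x j u))^T) y.
Proof.
rewrite qform_sum; apply: eq_bigr => j _; rewrite qform_sum.
by apply: eq_bigr => u _; rewrite qformZ.
Qed.

Lemma info_sum_ge0 y : 0 <= qform (info_sum k x pi i t) y.
Proof.
rewrite qform_info_sum; apply: sumr_ge0 => j _; apply: sumr_ge0 => u ju.
have /andP[p_gt0 p_lt1] := pi01 ju.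
by rewrite mulr_ge0 ?qform_gram ?sqnormr_ge0 // mulr_ge0 ?subr_ge0 // ltW.
Qed.

Lemma Vit_posdef (g l : R) (Eu Et : {set 'I_k * 'I_k}) :
  1 <= g -> 0 <= l -> posdef (Vit g l Eu Et x pi i t).
Proof.
by move=> g_ge1 l_ge0; apply/posdef_addr/info_sum_ge0/posdef_ge1/V0_ge1.
Qed.

Lemma info_sum_le (c : R) : (i + t - 1 <= k)%N ->
  (forall j u, precedes j u i t -> sqnorm (x j u) <= 1) ->
  3 / 4 * (npreceding k i t)%:R <= c ->
  loewner_le (info_sum k x pi i t) c%:M.
Proof.
move=> itk x_le1 c_ge y; rewrite qform_info_sum qform_scalar.
apply: (@le_trans _ _ (\sum_(j < k.+1) \sum_(u < k.+1 | precedes j u i t)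
                        3 / 4 * sqnormr y)).
  apply: ler_sum => j _; apply: ler_sum => u ju.
  have /andP[hj hu] := precedes_bounds itk ju.
  exact: variance_rank1_le (pi01 ju) (sqnormr_phi_le hj hu (x_le1 _ _ ju)).
have -> : \sum_(j < k.+1) \sum_(u < k.+1 | precedes j u i t) 3 / 4 * sqnormr y
          = 3 / 4 * (npreceding k i t)%:R * sqnormr y.
  rewrite /npreceding natr_sum mulr_sumr mulr_suml; apply: eq_bigr => j _.
  by rewrite natr_sum mulr_sumr mulr_suml; apply: eq_bigr => u _; rewrite mulr1.
by rewrite ler_wpM2r ?sqnormr_ge0.
Qed.

End Information.

Lemma log_argument_ge (R : realFieldType) (k c e : nat) (g l : R) :
  (1 <= k)%N -> (c * 2 <= k * k.+1)%N -> 1 <= g -> 0 <= l ->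
  3 / 4 * c%:R <= (3 * k * (k + 1))%:R / 8 + g * k%:R + 2 * l * e%:R - 1.
Proof.
move=> k_ge1 c_le g_ge1 l_ge0.
have c_leR : c%:R * 2 <= (k * k.+1)%:R :> R by rewrite -natrM ler_nat.
have gk_ge1 : 1 <= g * k%:R by rewrite mulr_ege1 // ler1n.
have le_ge0 : 0 <= 2 * l * e%:R by rewrite !mulr_ge0.
have -> : (3 * k * (k + 1))%:R / 8 = 3 / 8 * (k * k.+1)%:R :> R.
  by rewrite -mulnA natrM addn1 mulrAC mulrC.
move: c_leR gk_ge1 le_ge0.
by move: (2 * l * _) (g * _) ((k * _)%:R : R) (c%:R : R) => a b K C; lra.
Qed.

Lemma ln_ratio_le (R : realType) (A B S : R) n :
  0 < A -> A <= S ^+ n * B -> 1 <= S -> ln (A / B) <= n%:R * ln S.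
Proof.
move=> A_gt0 AB S_ge1; have S_gt0 := lt_le_trans ltr01 S_ge1.
have Sn_gt0 : 0 < S ^+ n by rewrite exprn_gt0.
have B_gt0 : 0 < B by rewrite -(pmulr_rgt0 _ Sn_gt0) (lt_le_trans A_gt0 AB).
rewrite mulr_natl -lnXn // ler_ln ?posrE ?divr_gt0 //.
by rewrite ler_pdivrMr.
Qed.

Theorem lemmaE11 (R : realType) (d k i t : nat) (gamma lambda : R)
  (Eu Et : {set 'I_k * 'I_k})
  (x : nat -> nat -> 'cV[R]_d) (pi : nat -> nat -> R) :
  (1 <= d)%N -> (1 <= k)%N -> (1 <= i)%N -> (1 <= t)%N -> (i + t - 1 <= k)%N ->
  0 <= lambda -> 1 <= gamma ->
  simple_edges Eu -> simple_edges Et ->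
  (forall j u, precedes j u i t -> sqnorm (x j u) <= 1) ->
  (forall j u, precedes j u i t -> 0 < pi j u < 1) ->
  ln (\det (invmx (Vund gamma lambda Eu Et x pi i t))
      / \det (Lambda0 gamma lambda Eu Et x pi i t))
  <= (2 * d)%:R *
     ln ((3 * k * (k + 1))%:R / 8 + gamma * k%:R
         + 2 * lambda * (#|Eu| + #|Et|)%:R).
Proof.
move=> _ k_ge1 i_ge1 t_ge1 itk lambda_ge0 gamma_ge1 _ _ x_le1 pi01.
rewrite /Vund /Lambda0 invmxK.
set S := (_ / 8 + _ + _).
have S_ge : 3 / 4 * (npreceding k i t)%:R <= S - 1.
  exact: log_argument_ge k_ge1 (npreceding_le itk) gamma_ge1 lambda_ge0.
have S_ge1 : 1 <= S.
  by rewrite -subr_ge0 (le_trans _ S_ge) // mulr_ge0 ?divr_ge0 ?ler0n.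
have V0_ge := V0_ge1 (d := d) Eu Et gamma_ge1 lambda_ge0.
have VS : loewner_le (Vit gamma lambda Eu Et x pi i t)
                     (S *: V0 d gamma lambda Eu Et).
  rewrite VitE; apply: loewner_add_scale S_ge1 V0_ge
                        (info_sum_le pi01 itk x_le1 S_ge).
have [i_bnd t_bnd] : (1 <= i <= k)%N /\ (1 <= t <= k)%N by split; lia.
have /andP[A_gt0 AB] := det_conj_inv_le
  (Vit_sym i t x pi gamma lambda Eu Et) (V0_sym d gamma lambda Eu Et)
  (Vit_posdef x pi01 Eu Et gamma_ge1 lambda_ge0) VS (Cmat_row_inj i_bnd t_bnd).
apply: le_trans (ln_ratio_le A_gt0 AB S_ge1) _.
by rewrite ler_wpM2r ?ln_ge0 // ler_nat leq_pmull.
Qed.
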